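(* Take $\Omega=D=\mathbb{C}\setminus\{0,-1,-2,\dots\}$. For every $\delta>0$ there exists a Lebesgue measurable set $S\subseteq D$ with two-dimensional Lebesgue measure $\lambda(S)<\delta$ such that $\mathrm{Cl}_D(S)=D$.
   Context: Let $\Omega$ be either $(0,\infty)$ or $D=\mathbb{C}\setminus\{0,-1,-2,\dots\}$. An admissible instance (relative to $\Omega$) is one of the following finite lists of points, all entries of which are required to lie in $\Omega$: (i) $(z+1,\,z)$ for $z\in\Omega$ with $z+1\in\Omega$ (corresponding to the identity $\Gamma(z+1)=z\Gamma(z)$); (ii) $(z,\,1-z)$ for $z\in\Omega\setminus\mathbb{Z}$ with $1-z\in\Omega$ (corresponding to $\Gamma(z)\Gamma(1-z)=\pi/\sin(\pi z)$); (iii) for an integer $n\ge 2$, $\big(z,\,\tfrac{z}{n},\,\tfrac{z+1}{n},\dots,\tfrac{z+n-1}{n}\big)$ (corresponding to Gauss's multiplication formula $(2\pi)^{(n-1)/2}n^{1/2-z}\Gamma(z)=\prod_{j=0}^{n-1}\Gamma(\tfrac{z+j}{n})$). For $B\subseteq\Omega$, a point $p\in\Omega$ is obtained from $B$ in one step if there is an admissible instance in which $p$ occurs exactly once as an entry and every other entry lies in $B$. Set $B_0=B$, $B_{i+1}=B_i\cup\{p: p \text{ obtained from } B_i \text{ in one step}\}$, and $\mathrm{Cl}_\Omega(B)=\bigcup_{i\ge0}B_i$ (the set of points at which the value of $\Gamma$ is determined by its values on $B$ via finitely many applications of the identities). For $A,B\subseteq\Omega$ write $A\preceq B$ if $A\subseteq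 \mathrm{Cl}_\Omega(B)$. A set $S\subseteq\Omega$ is a fundamental set (for $\Gamma$ on $\Omega$) if $\mathrm{Cl}_\Omega(S)=\Omega$. *)

From HB Require Import structures.
From mathcomp Require Import all_boot all_algebra.
From mathcomp Require Import all_classical all_reals all_analysis.
From mathcomp Require Export complex.
Import GRing.Theory Num.Theory.

Set Implicit Arguments.
Unset Strict Implicit.
Unset Printing Implicit Defensive.

Local Open Scope ring_scope.
Local Open Scope classical_set_scope.

Section GammaClosure.
Variable R : realType.

Definition Dom : set R[i] := fun z => ~ (exists n : nat, z = - (n%:R)).

Definition is_int_C (z : R[i]) : Prop := exists k : int, z = k%:~R.

Inductive admissible (Omega : set R[i]) : seq R[i] -> Prop :=
  | adm_shift (z : R[i]) :
      Omega z -> Omega (z + 1) -> admissible Omega [:: z + 1; z]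
  | adm_reflect (z : R[i]) :
      Omega z -> ~ is_int_C z -> Omega (1 - z) -> admissible Omega [:: z; 1 - z]
  | adm_mult (n : nat) (z : R[i]) :
      (2 <= n)%N ->
      (forall q, q \in z :: [seq (z + j%:R) / n%:R | j <- iota 0 n] -> Omega q) ->
      admissible Omega (z :: [seq (z + j%:R) / n%:R | j <- iota 0 n]).

(* Cl_Omega(B): least set containing B and closed under "obtained in one step".
   This is the union of the iterates B_i of the paper. *)
Inductive Cl (Omega : set R[i]) (B : set R[i]) : R[i] -> Prop :=
  | Cl_base (p : R[i]) : B p -> Cl Omega B p
  | Cl_step (p : R[i]) (L : seq R[i]) :
      admissible Omega L ->
      count (pred1 p) L = 1%N ->
      (forall q, q \in L -> q != p -> Cl Omega B q) ->
      Cl Omega B p.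

Definition pts (S : set R[i]) : set (R * R) :=
  [set xy | S (xy.1 +i* xy.2)%C].

Definition lambda2 (S : set R[i]) : \bar R :=
  ((@lebesgue_measure R) \x (@lebesgue_measure R))%E (pts S).

End GammaClosure.

From mathcomp Require Import all_boot all_algebra.
From mathcomp Require Import all_classical all_reals all_analysis.
From mathcomp Require Import complex.
From mathcomp Require Import lra.
Import order.Order.TTheory GRing.Theory Num.Theory.
Local Open Scope ring_scope.
Local Open Scope classical_set_scope.

(* For e > 0 let S_e be the thin rectangle 1/2 <= Re z <= 3/2, |Im z| < e, of
   area 2e.  Its closure under the Gamma identities is all of D:
   - the shift identity (z+1, z) moves any point of D by integers in both
     directions inside D, so every z in D with |Im z| < e is reached from S_e
     by translating its real part into [1/2, 3/2];
   - a point z of D with |Im z| >= e is not real, and Gauss's multiplication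
     formula with n large enough determines Gamma(z) from the n points
     (z + j)/n, whose imaginary part Im z / n is nonzero and smaller than e. *)

Section Closure.
Context {R : realType}.
Implicit Types Om B : set R[i].

Lemma admissible_in Om L q : admissible Om L -> q \in L -> Om q.
Proof.
case=> [z h1 h2|z h1 _ h2|n z _ h]; rewrite ?inE; last exact: h.
- by case/orP=> /eqP->.
- by case/orP=> /eqP->.
Qed.

Lemma Cl_subset Om B : B `<=` Om -> Cl Om B `<=` Om.
Proof.
move=> BOm p [q /BOm //|q L admL cntL _].
by apply: (admissible_in _ _ _ admL); rewrite -has_pred1 has_count cntL.
Qed.

Lemma Cl_pair Om B x y :
  admissible Om [:: x; y] -> x != y -> Cl Om B x <-> Cl Om B y.
Proof.
move=> admxy xy; have yx : (y == x) = false by rewrite eq_sym; apply/negbTE.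
split=> h; apply: (Cl_step admxy) => [|q]; rewrite /= ?eqxx ?(negbTE xy) ?yx //.
- by rewrite !inE => /orP[] /eqP-> //; rewrite eqxx.
- by rewrite !inE => /orP[] /eqP-> //; rewrite eqxx.
Qed.

End Closure.

Section GammaOnD.
Context {R : realType}.
Implicit Types (B : set R[i]) (z : R[i]) (e : R).

Local Notation D := (@Dom R).

Lemma Re_natr n : complex.Re (n%:R : R[i]) = n%:R.
Proof. by rewrite raddfMn. Qed.

Lemma Im_natr n : complex.Im (n%:R : R[i]) = 0.
Proof. by rewrite raddfMn /= mul0rn. Qed.

Lemma Dom_Im z : complex.Im z != 0 -> D z.
Proof. by move=> Imz [n zn]; move: Imz; rewrite zn raddfN /= Im_natr oppr0 eqxx. Qed.

Lemma Dom_Re z : 0 < complex.Re z -> D z.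
Proof.
move=> Rez [n zn]; move: Rez; rewrite zn raddfN /= Re_natr => Rez.
by have := ler0n R n; lra.
Qed.

Lemma Dom_addn z k : D z -> D (z + k%:R).
Proof.
move=> Dz [n zkn]; apply: Dz; exists (n + k)%N.
by rewrite natrD opprD -zkn addrK.
Qed.

(* The identity Gamma(z+1) = z Gamma(z) links z and z + 1 for z in D. *)
Lemma Cl_succ B z : D z -> Cl D B (z + 1) <-> Cl D B z.
Proof.
move=> Dz; apply: Cl_pair; first by apply: adm_shift => //; exact: (Dom_addn _ 1%N).
by rewrite -subr_eq0 addrC addKr oner_eq0.
Qed.

Lemma Cl_addn B z k : D z -> Cl D B (z + k%:R) <-> Cl D B z.
Proof.
move=> Dz; elim: k => [|k IHk]; first by rewrite addr0.
by rewrite -natr1 addrA Cl_succ //; exact: Dom_addn.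
Qed.

Definition strip e : set R[i] :=
  fun z => 2^-1 <= complex.Re z <= 3/2 /\ `|complex.Im z| < e.

Lemma strip_sub_Dom e : strip e `<=` D.
Proof. by move=> z [/andP[Rez _] _]; apply: Dom_Re; lra. Qed.

Lemma Cl_band e z : D z -> `|complex.Im z| < e -> Cl D (strip e) z.
Proof.
move=> Dz Imz.
have ReDn k : complex.Re (z + k%:R) = complex.Re z + k%:R by rewrite raddfD /= Re_natr.
have ImDn k : complex.Im (z + k%:R) = complex.Im z by rewrite raddfD /= Im_natr addr0.
have [Rez|Rez] := lerP 2^-1 (complex.Re z).
  set k := Num.truncn (complex.Re z - 2^-1).
  have /andP[k_le k_gt] : k%:R <= complex.Re z - 2^-1 < k.+1%:R.
    by apply: truncn_itv; lra.
  have ReB : complex.Re (z - k%:R) = complex.Re z - k%:R by rewrite raddfB /= Re_natr.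
  have DzB : D (z - k%:R) by apply: Dom_Re; rewrite ReB; lra.
  rewrite -(subrK k%:R z) Cl_addn //; apply: Cl_base; split.
    by rewrite ReB; move: k_gt; rewrite -[k.+1%:R]natr1 => ?; apply/andP; split; lra.
  by rewrite raddfB /= Im_natr subr0.
set m := Num.truncn (2^-1 - complex.Re z).
have /andP[m_le m_gt] : m%:R <= 2^-1 - complex.Re z < m.+1%:R.
  by apply: truncn_itv; lra.
rewrite -(Cl_addn _ _ m.+1) //; apply: Cl_base; split; last by rewrite ImDn.
by rewrite ReDn; move: m_gt; rewrite -[m.+1%:R]natr1 => ?; apply/andP; split; lra.
Qed.

Lemma Im_gauss z n j : (0 < n)%N ->
  complex.Im ((z + j%:R) / n%:R) = complex.Im z / n%:R.
Proof.
move=> n_gt0; have nR0 : (n%:R : R) != 0 by rewrite pnatr_eq0 -lt0n.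
have nC0 : (n%:R : R[i]) != 0 by rewrite pnatr_eq0 -lt0n.
have /(congr1 (@complex.Im R)) : (z + j%:R) / n%:R * n%:R = z + j%:R by rewrite divfK.
rewrite mulr_natr raddfMn raddfD /= Im_natr addr0 => <-.
by rewrite -[X in _ = X / _]mulr_natr mulfK.
Qed.

Lemma Cl_gauss B n z : (2 <= n)%N -> complex.Im z != 0 ->
  (forall j, (j < n)%N -> Cl D B ((z + j%:R) / n%:R)) -> Cl D B z.
Proof.
move=> n_ge2 Imz clj; have n_gt0 : (0 < n)%N by apply: leq_trans n_ge2.
set L := [seq (z + j%:R) / n%:R | j <- iota 0 n].
have ImL q : q \in L -> complex.Im q = complex.Im z / n%:R.
  by case/mapP=> j _ ->; exact: Im_gauss.
have Im_shrinks : complex.Im z / n%:R != complex.Im z.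
  apply/eqP => /(congr1 (fun x => x * n%:R)); rewrite divfK ?pnatr_eq0 -?lt0n //.
  move/eqP; rewrite -subr_eq0 -{1}(mulr1 (complex.Im z)) -mulrBr mulf_eq0.
  rewrite (negbTE Imz) subr_eq0 /= => /eqP one_n.
  by move: n_ge2; rewrite -(ler_nat R) -one_n; lra.
have DL q : q \in L -> D q by move=> /ImL Imq; apply: Dom_Im; rewrite Imq mulf_neq0 ?invr_eq0 ?pnatr_eq0 -?lt0n.
have zL : z \notin L by apply/negP => /ImL/esym/eqP; rewrite (negbTE Im_shrinks).
apply: (@Cl_step _ _ _ _ (z :: L)).
- apply: adm_mult => // q; rewrite inE => /orP[/eqP->|]; [exact: Dom_Im | exact: DL].
- by rewrite /= eqxx (count_memPn zL).
- move=> q; rewrite inE => /orP[/eqP->|]; first by rewrite eqxx.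
  by case/mapP=> j; rewrite mem_iota add0n => /andP[_ jn] -> _; exact: clj.
Qed.

(* Every point of D is reached from the strip: far from the real axis, one
   application of Gauss's formula brings the imaginary part into the band. *)
Lemma Cl_strip e : 0 < e -> Cl D (strip e) = D.
Proof.
move=> e_gt0; apply/seteqP; split; first exact: (Cl_subset _ _ (strip_sub_Dom e)).
move=> z Dz; have [Imz|Imz] := ltrP `|complex.Im z| e; first exact: Cl_band.
have Imz0 : complex.Im z != 0 by rewrite -normr_eq0; apply/eqP => Im0; lra.
set n := (Num.bound (`|complex.Im z| / e)).+2.
have n_gt0 : (0 < n)%N by [].
have Imz_lt : `|complex.Im z| < n%:R * e.
  rewrite -ltr_pdivrMr //; apply: lt_le_trans (archi_boundP _) _.
    by rewrite divr_ge0 // ltW.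
  by rewrite ler_nat leqW.
apply: (Cl_gauss _ n) => // j _.
have Imq := Im_gauss z n j n_gt0.
apply: Cl_band => //.
  by apply: Dom_Im; rewrite Imq mulf_neq0 // invr_eq0 pnatr_eq0 -lt0n.
by rewrite Imq normf_div normr_nat ltr_pdivrMr ?ltr0n // mulrC.
Qed.

Lemma pts_strip e : pts (strip e) = `[2^-1, 3/2]%classic `*` `](- e), e[%classic.
Proof.
apply/seteqP; split=> [[x y]|[x y]]; rewrite /pts /strip /=.
  by move=> [h1 h2]; split; rewrite /= in_itv /= ?h1 // -ltr_norml.
by move=> [/= h1 h2]; move: h1 h2; rewrite !in_itv /= => -> h2; split => //; rewrite ltr_norml.
Qed.

Lemma measurable_strip e : measurable (pts (strip e)).
Proof. by rewrite pts_strip; apply: measurableX; exact: measurable_itv. Qed.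

Lemma lambda2_strip e : 0 < e -> lambda2 (strip e) = (2 * e)%:E.
Proof.
move=> e_gt0; rewrite /lambda2 pts_strip product_measure1E ?measurable_itv //.
have len1 : lebesgue_measure (`[2^-1, 3/2]%classic : set R) = 1%:E.
  by rewrite lebesgue_measure_itv /= lte_fin ifT -?EFinD; [congr EFin; lra|lra].
have len2 : lebesgue_measure (`](- e), e[%classic : set R) = (2 * e)%:E.
  by rewrite lebesgue_measure_itv /= lte_fin ifT -?EFinD; [congr EFin; lra|lra].
rewrite [X in (X * _)%E](_ : _ = 1%:E); last exact: len1.
by rewrite [X in (_ * X)%E](_ : _ = (2 * e)%:E) ?mul1e; last exact: len2.
Qed.

End GammaOnD.

Theorem mainTheorem10 (R : realType) (delta : R) :
  0 < delta ->
  exists S : set R[i],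
    [/\ S `<=` @Dom R,
        measurable (pts S),
        (lambda2 S < delta%:E)%E
      & Cl (@Dom R) S = @Dom R].
Proof.
move=> delta_gt0; have e_gt0 : 0 < delta / 4 by lra.
exists (strip (delta / 4)); split.
- exact: strip_sub_Dom.
- exact: measurable_strip.
- by rewrite lambda2_strip // lte_fin; lra.
- exact: Cl_strip.
Qed.
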